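(* Let $p\in(0,1)$, $\mu>0$, and let $k\ge 3$, $1\le \ell\le k-2$ and $m\ge 2$ be integers. Then there exist $n_0$ and $\alpha>0$ such that for every $n\ge n_0$ there exists a $(p,\mu)$-dense $k$-partite $k$-graph $H$, each of whose parts has exactly $n$ vertices, such that $\delta'_{\ell}(H)\ge \alpha n^{k-\ell}$ and $H$ has no $K_k(m)$-factor.
   Context: A $k$-graph $H$ has a vertex set $V(H)$ and an edge set $E(H)$ consisting of $k$-element subsets of $V(H)$. A $k$-partite $k$-graph comes with a fixed partition $V(H)=V_1\cup\dots\cup V_k$ (its parts) such that every edge meets each $V_i$ in at most one vertex. A set $S\subseteq V(H)$ is legal if $|S\cap V_i|\le 1$ for all $i$. For $S\subseteq V(H)$ with $|S|=s<k$, $\deg_H(S)$ is the number of $(k-s)$-sets $S'$ with $S\cup S'\in E(H)$. The partite minimum $s$-degree $\delta'_s(H)$ is the minimum of $\deg_H(S)$ over all legal $s$-subsets $S$. A $k$-partite $k$-graph $H$ with parts $V_1,\dots,V_k$ and $N=|V(H)|$ vertices is $(p,\mu)$-dense if for all $X_1\subseteq V_1,\dots,X_k\subseteq V_k$ we have $e_H(X_1,\dots,X_k)\ge p|X_1|\cdots|X_k|-\mu N^k$, where $e_H(X_1,\dots,X_k)$ is the number of $(x_1,\dots,x_k)\in X_1\times\dots\times X_k$ with $\{x_1,\dots,x_k\}\in E(H)$. $K_k(m)$ denotes the complete $k$-partite $k$-graph with each part of size $m$. An $F$-factor in $H$ is a set of pairwise vertex-disjoint subgraphs of $H$, each isomorphic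 to $F$, covering $V(H)$. *)

From HB Require Import structures.
From mathcomp Require Import all_boot all_order all_algebra.
From mathcomp Require Import reals.
Set Implicit Arguments. Unset Strict Implicit. Unset Printing Implicit Defensive.
Import Order.TTheory GRing.Theory Num.Theory.
Local Open Scope ring_scope.

(* Vertex set of a k-partite k-graph with parts of size n:
   vertex (i, j) lies in part V_i, i : 'I_k, j : 'I_n. *)
Definition vtx (k n : nat) : finType := ('I_k * 'I_n)%type.

Definition part (k n : nat) (i : 'I_k) : {set vtx k n} := [set v | v.1 == i].

Definition legal (k n : nat) (S : {set vtx k n}) : bool :=
  [forall i : 'I_k, (#|S :&: part n i| <= 1)%N].

Definition kpartite_kgraph (k n : nat) (E : {set {set vtx k n}}) : Prop :=
  forall e, e \in E -> #|e| = k /\ legal e.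

Definition deg (k n : nat) (E : {set {set vtx k n}}) (S : {set vtx k n}) : nat :=
  #|[set S' : {set vtx k n} | (#|S'| == k - #|S|)%N && (S :|: S' \in E)]|.

Definition eH (k n : nat) (E : {set {set vtx k n}}) (X : 'I_k -> {set vtx k n}) : nat :=
  #|[set x : {ffun 'I_k -> vtx k n} |
      [forall i, x i \in X i] && ([set x i | i : 'I_k] \in E)]|.

(* (p, mu)-density, with N = |V(H)| = k n. *)
Definition dense (R : realType) (p mu : R) (k n : nat) (E : {set {set vtx k n}}) : Prop :=
  forall X : 'I_k -> {set vtx k n},
    (forall i, X i \subset part n i) ->
    p * (\prod_(i < k) #|X i|)%N%:R - mu * ((k * n)%N%:R ^+ k) <= (eH E X)%:R.

(* Vertices of K_k(m): (i, j), i : 'I_k part index, j : 'I_m.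
   Edges of K_k(m): [set (i, g i) | i] for g : 'I_k -> 'I_m. *)
Definition Kvtx (k m : nat) : finType := ('I_k * 'I_m)%type.

Definition K_copy (k n m : nat) (E : {set {set vtx k n}}) (phi : Kvtx k m -> vtx k n) : Prop :=
  injective phi /\
  forall g : {ffun 'I_k -> 'I_m}, [set phi (i, g i) | i : 'I_k] \in E.

Definition has_Kfactor (k n m : nat) (E : {set {set vtx k n}}) : Prop :=
  exists (t : nat) (phi : 'I_t -> Kvtx k m -> vtx k n),
    (forall a, K_copy E (phi a)) /\
    (forall a b, a != b -> [disjoint [set phi a v | v : Kvtx k m] & [set phi b v | v : Kvtx k m]]) /\
    (forall x : vtx k n, exists a v, phi a v = x).

(* Fix q with 3 < mu q and, for n >= 2q, let c = n / q.  Let B be the set of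
   the first 2c + 1 vertices of part 0 and the first 2c vertices of every
   other part, and let H = even_graph B consist of all legal k-sets meeting B
   in an even number of vertices.
   - No factor: in a copy of K_k(m) whose edges all meet B evenly, each part
     of the copy lies entirely inside or entirely outside B (swap one vertex
     of an edge), so the copy meets B evenly; as |B| is odd, disjoint copies
     cannot cover V(H).
   - Density: a transversal tuple that is not an edge has a coordinate in B,
     so at most sum_i |B ∩ V_i| n^(k-1) <= 3 k n^k / q < mu (kn)^k tuples of
     any box are missed.
   - Degree: a legal l-set S extends to an edge by choosing a vertex of a
     free part j1 in or outside B (fixing the parity) and vertices outside B
     in the other free parts, giving >= 2c (n - 2c - 1)^(k-l-1) edges. *)

From HB Require Import structures.
From mathcomp Require Import all_boot all_order all_algebra.
From mathcomp Require Import reals.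
From mathcomp Require Import zify lra.
Import Order.TTheory GRing.Theory Num.Theory.
Set Implicit Arguments. Unset Strict Implicit. Unset Printing Implicit Defensive.

Definition box (k : nat) (T : finType) (F : 'I_k -> {set T}) :
  {set {ffun 'I_k -> T}} := [set x : {ffun 'I_k -> T} | [forall i, x i \in F i]].

Lemma card_box (k : nat) (T : finType) (F : 'I_k -> {set T}) :
  #|box F| = (\prod_i #|F i|)%N.
Proof.
have -> : #|box F| = #|(family (fun i => mem (F i)) : simpl_pred {ffun 'I_k -> T})|.
  by apply: eq_card => x; rewrite inE; apply/forallP/familyP.
by rewrite card_family foldrE big_image.
Qed.

Lemma card_sum (T : finType) (A : {set T}) : #|A| = (\sum_x (x \in A))%N.
Proof. by rewrite -sum1_card big_mkcond; apply: eq_bigr => x _; case: (x \in A). Qed.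

Lemma card_imset_meet (I T : finType) (f : I -> T) (B : {set T}) :
  injective f -> #|[set f i | i : I] :&: B| = #|[set i | f i \in B]|.
Proof.
move=> f_inj; suff -> : [set f i | i : I] :&: B = f @: [set i | f i \in B].
  exact: card_imset.
apply/setP => v; rewrite !inE; apply/andP/imsetP => [[/imsetP [i _ ->] hi]|[i]].
  by exists i; rewrite ?inE.
by rewrite inE => hi ->; split => //; apply/imsetP; exists i.
Qed.

Lemma card_cover (T I : finType) (A C : {set T}) (D : I -> {set T}) :
  (forall x, x \in A -> x \notin C -> exists i, x \in D i) ->
  (#|A| <= #|C| + \sum_i #|D i|)%N.
Proof.
move=> cover; rewrite !card_sum.
under [X in _ + X]eq_bigr do rewrite card_sum.
rewrite exchange_big -big_split /=; apply: leq_sum => x _.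
case xA: (x \in A) => //; case xC: (x \in C) => //.
have [i xDi] := cover x xA (negbT xC).
by rewrite (bigD1 i) //= xDi.
Qed.

Lemma in_part (k n : nat) (i : 'I_k) (v : vtx k n) : (v \in part n i) = (v.1 == i).
Proof. by rewrite inE. Qed.

Lemma card_part (k n : nat) (i : 'I_k) : #|part n i| = n.
Proof.
have -> : part n i = [set ((i, j) : vtx k n) | j : 'I_n].
  apply/setP => -[a b]; rewrite in_part /=.
  by apply/eqP/imsetP => [->|[j _ [-> _]]] //; exists b.
by rewrite card_imset ?card_ord // => a b [].
Qed.

Lemma legal_eq (k n : nat) (S : {set vtx k n}) (u v : vtx k n) :
  legal S -> u \in S -> v \in S -> u.1 = v.1 -> u = v.
Proof.
move=> /forallP /(_ u.1) /card_le1_eqP leS uS vS e.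
by apply: leS; rewrite !inE ?uS ?vS e eqxx.
Qed.

Section Transversal.
Variables (k n : nat) (x : 'I_k -> vtx k n).
Hypothesis x_part : forall i, x i \in part n i.

Lemma transversal_inj : injective x.
Proof.
by move=> i j e; have := x_part i; have := x_part j; rewrite !in_part e => /eqP -> /eqP.
Qed.

Lemma transversal_card : #|[set x i | i : 'I_k]| = k.
Proof. by rewrite card_imset ?card_ord //; exact: transversal_inj. Qed.

Lemma transversal_legal : legal [set x i | i : 'I_k].
Proof.
apply/forallP => j; rewrite (_ : _ :&: _ = [set x j]) ?cards1 //.
apply/setP => v; rewrite !inE; apply/andP/eqP => [[/imsetP [i _ ->]]|->].
  by have := x_part i; rewrite !in_part => /eqP -> /eqP ->.
by split; [apply/imsetP; exists j | rewrite -in_part].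
Qed.

End Transversal.

Lemma transversal_image_inj (k n : nat) (x y : {ffun 'I_k -> vtx k n}) :
  (forall i, x i \in part n i) -> (forall i, y i \in part n i) ->
  [set x i | i : 'I_k] = [set y i | i : 'I_k] -> x = y.
Proof.
move=> x_part y_part exy; apply/ffunP => i.
have /imsetP [j _ xy] : x i \in [set y i | i : 'I_k] by rewrite -exy imset_f.
have := x_part i; rewrite xy in_part => /eqP yi.
by have := y_part j; rewrite in_part yi => /eqP ->.
Qed.

Lemma dense_of_missing (R : realType) (p mu : R) (k n D : nat)
    (E : {set {set vtx k n}}) :
  (p <= 1)%R ->
  (forall X : 'I_k -> {set vtx k n}, (forall i, X i \subset part n i) ->
     \prod_i #|X i| <= eH E X + D)%N ->
  (D%:R <= mu * (k * n)%N%:R ^+ k)%R -> dense p mu E.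
Proof.
move=> p1 missing D_small X X_part.
move: (missing X X_part); rewrite -(ler_nat R) natrD => P_le.
have : (p * (\prod_i #|X i|)%N%:R <= (\prod_i #|X i|)%N%:R)%R by rewrite ler_piMl.
lra.
Qed.

(* Lower bound on the degree of [S]: every set of transversal tuples that
   complete [S] to an edge yields as many distinct edges through [S], since
   a transversal tuple is determined by its values. *)
Lemma deg_ge_card (k n : nat) (E : {set {set vtx k n}}) (S : {set vtx k n})
    (A : {set {ffun 'I_k -> vtx k n}}) :
  (forall x, x \in A -> [/\ forall i, x i \in part n i,
      S \subset [set x i | i : 'I_k] & [set x i | i : 'I_k] \in E]) ->
  (#|A| <= deg E S)%N.
Proof.
move=> completes; pose Y (x : {ffun 'I_k -> vtx k n}) := [set x i | i : 'I_k] :\: S.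
have SY x : x \in A -> S :|: Y x = [set x i | i : 'I_k].
  by case/completes => _ SI _; rewrite -[RHS](setID _ S) (setIidPr SI).
have Y_inj : {in A &, injective Y}.
  move=> x y xA yA Yxy; have [x_part _ _] := completes x xA.
  have [y_part _ _] := completes y yA.
  by apply: transversal_image_inj => //; rewrite -SY // Yxy SY.
rewrite -(card_in_imset Y_inj) /deg; apply/subset_leq_card/subsetP => _ /imsetP [x xA ->].
have [x_part SI xE] := completes x xA.
by rewrite inE SY // xE cardsDS // transversal_card // eqxx.
Qed.

Lemma card_disjoint_cover (T I : finType) (A : I -> {set T}) (B : {set T}) :
  (forall a b, a != b -> [disjoint A a & A b]) -> (forall x, exists a, x \in A a) ->
  #|B| = (\sum_a #|A a :&: B|)%N.
Proof.
move=> disjA coverA; under eq_bigr do rewrite card_sum.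
rewrite exchange_big card_sum; apply: eq_bigr => x _ /=.
have [a xa] := coverA x; rewrite (bigD1 a) //= big1 => [|b ba].
  by rewrite inE xa addn0.
apply/eqP; rewrite eqb0 inE negb_and; apply/orP; left; apply/negP => xb.
by have := disjA _ _ ba; rewrite disjoints_subset => /subsetP /(_ _ xb); rewrite inE xa.
Qed.

(* If every choice of one entry per row of a 0/1 matrix has an even sum,
   then the whole matrix has an even sum: each row is constant (changing one
   entry of a choice must keep its parity), so the total is [m] times the
   sum of a single choice. *)
Lemma even_sum_of_even_choices (k m : nat) (P : 'I_k -> 'I_m -> bool) :
  (forall g : {ffun 'I_k -> 'I_m}, ~~ odd (\sum_i P i (g i))) ->
  ~~ odd (\sum_i \sum_j P i j).
Proof.
case: m P => [|m] P evenP; first by rewrite big1 // => i _; rewrite big_ord0.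
pose g0 : {ffun 'I_k -> 'I_m.+1} := [ffun => ord0].
have row_const i j : P i j = P i ord0.
  pose g : {ffun 'I_k -> 'I_m.+1} := [ffun i' => if i' == i then j else ord0].
  have e0 := evenP g0; have e1 := evenP g.
  rewrite (bigD1 i) //= in e0; rewrite (bigD1 i) //= in e1.
  rewrite (eq_bigr (fun i' => P i' (g0 i') : nat)) in e1 => [|i' /negbTE i'i]; last first.
    by rewrite !ffunE i'i.
  move: e0 e1; rewrite !ffunE eqxx !oddD !oddb.
  by case: (P i j); case: (P i ord0); case: (odd _).
under eq_bigr do under eq_bigr do rewrite row_const.
rewrite (eq_bigr (fun i => m.+1 * P i ord0)) => [|i _]; last first.
  by rewrite sum_nat_const card_ord.
rewrite -big_distrr /= oddM negb_and orbC.
suff -> : (\sum_i P i ord0 = \sum_i P i (g0 i))%N by rewrite evenP.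
by apply: eq_bigr => i _; rewrite ffunE.
Qed.

Definition even_graph (k n : nat) (B : {set vtx k n}) : {set {set vtx k n}} :=
  [set e : {set vtx k n} | (#|e| == k) && legal e && ~~ odd #|e :&: B|].

Lemma even_graph_kpartite (k n : nat) (B : {set vtx k n}) :
  kpartite_kgraph (even_graph B).
Proof. by move=> e; rewrite inE => /andP [/andP [/eqP -> ->] _]. Qed.

Section ParityObstruction.
Variables (k n m : nat) (E : {set {set vtx k n}}) (B : {set vtx k n}).
Hypothesis E_even : forall e, e \in E -> ~~ odd #|e :&: B|.

Lemma K_copy_even (phi : Kvtx k m -> vtx k n) :
  K_copy E phi -> ~~ odd #|[set phi v | v : Kvtx k m] :&: B|.
Proof.
move=> [phi_inj phi_edge]; rewrite card_imset_meet // card_sum.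
have -> : (\sum_v (v \in [set v | phi v \in B]) = \sum_i \sum_j (phi (i, j) \in B))%N.
  by rewrite pair_bigA; apply: eq_bigr => -[i j] _; rewrite inE.
apply: (@even_sum_of_even_choices k m (fun i j => phi (i, j) \in B)) => g.
have := E_even (phi_edge g); rewrite card_imset_meet => [|i j /phi_inj [] //].
by rewrite card_sum; under eq_bigr do rewrite inE.
Qed.

Lemma no_Kfactor_of_odd : odd #|B| -> ~ has_Kfactor m E.
Proof.
move=> oddB [t [phi [phi_copy [phi_disj phi_cover]]]].
move: oddB; rewrite (card_disjoint_cover B phi_disj) => [|x]; last first.
  by have [a [v <-]] := phi_cover x; exists a; rewrite imset_f.
apply/negP; elim/big_ind: _ => // [x y ex ey | a _].
  by rewrite oddD negb_add (negbTE ex) (negbTE ey).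
exact: K_copy_even.
Qed.

End ParityObstruction.

(* Density defect of [even_graph B]: a transversal tuple that is not an
   edge meets [B] (oddly, hence at all), so the missing tuples are at most
   those with some coordinate [i] in [B], i.e. [sum_i |B ∩ V_i| n^(k-1)]. *)
Lemma even_graph_missing (k n : nat) (B : {set vtx k n}) (X : 'I_k -> {set vtx k n}) :
  (forall i, X i \subset part n i) ->
  (\prod_i #|X i| <= eH (even_graph B) X + \sum_i #|B :&: part n i| * n ^ (k - 1))%N.
Proof.
move=> X_part.
pose G (i j : 'I_k) : {set vtx k n} := if j == i then B :&: part n i else part n j.
rewrite -(card_box X); apply: leq_trans (@card_cover _ _ (box X) [set x : {ffun 'I_k -> vtx k n} |
    [forall i, x i \in X i] && ([set x i | i : 'I_k] \in even_graph B)]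
    (fun i => box (G i)) _) _.
  move=> x; rewrite !inE => /forallP xX.
  have x_part i : x i \in part n i by apply: (subsetP (X_part i)).
  rewrite (introT forallP xX) transversal_card // transversal_legal // eqxx /= negbK.
  rewrite card_imset_meet; last exact: transversal_inj.
  move=> /odd_gt0 /card_gt0P [i]; rewrite inE => xiB; exists i.
  rewrite inE; apply/forallP => j; rewrite /G.
  by case: eqP => [->|_]; rewrite ?in_setI ?xiB x_part.
rewrite /eH leq_add2l; apply: leq_sum => i _; rewrite card_box (bigD1 i) //= /G eqxx leq_mul2l.
rewrite (eq_bigr (fun _ => n)) => [|j /negbTE ->]; last exact: card_part.
by rewrite prod_nat_const cardC1 card_ord subn1 leqnn orbT.
Qed.

Definition parts (k n : nat) (S : {set vtx k n}) : {set 'I_k} := [set v.1 | v in S].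

Lemma card_parts (k n : nat) (S : {set vtx k n}) : legal S -> #|parts S| = #|S|.
Proof. by move=> legS; rewrite card_in_imset // => u v; exact: legal_eq. Qed.

Section EvenGraphLink.
Variables (k n : nat) (B S : {set vtx k n}) (j1 : 'I_k).
Hypotheses (legS : legal S) (j1_free : j1 \notin parts S).

(* Completions of [S] to edges of [even_graph B]: keep [S] on its own parts,
   choose the vertex of part [j1] in [B] or outside [B] so as to make the
   total parity even, and all other vertices outside [B]. *)
Definition completion_factor (i : 'I_k) : {set vtx k n} :=
  (if i \in parts S then S
   else if (i == j1) && odd #|S :&: B| then B else ~: B) :&: part n i.

Lemma completion_edge (x : {ffun 'I_k -> vtx k n}) :
  x \in box completion_factor -> [/\ forall i, x i \in part n i,
    S \subset [set x i | i : 'I_k] & [set x i | i : 'I_k] \in even_graph B].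
Proof.
rewrite inE => /forallP x_fac.
have x_part i : x i \in part n i by have /setIP [] := x_fac i.
have x_S v : v \in S -> x v.1 = v.
  move=> vS; have := x_fac v.1; rewrite /completion_factor /parts imset_f //.
  by case/setIP => xS; rewrite in_part => /eqP xv; apply: legal_eq legS xS vS xv.
have S_sub : S \subset [set x i | i : 'I_k].
  by apply/subsetP => v vS; rewrite -(x_S v vS) imset_f.
have x_free i : i \notin parts S -> x i \notin S.
  by apply: contra => xS; have := x_part i; rewrite in_part => /eqP <-; apply: imset_f.
have meetB : [set x i | i : 'I_k] :&: B =
    (if odd #|S :&: B| then x j1 |: (S :&: B) else S :&: B).
  apply/setP => v; rewrite inE; apply/andP/idP => [[/imsetP [i _ ->] xB]|].
    have := x_fac i; rewrite /completion_factor; case: ifP => iS.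
      by case/setIP => xS _; case: ifP; rewrite ?in_setU1 in_setI xS xB ?orbT.
    case: ifP => [/andP [/eqP -> ->]|_]; last by rewrite in_setI inE xB.
    by rewrite in_setU1 eqxx.
  have in_image_B u : u \in S :&: B -> u \in [set x i | i : 'I_k] /\ u \in B.
    by case/setIP => uS uB; split; [rewrite -(x_S u uS) imset_f|].
  case: ifP => par; last exact: in_image_B.
  case/setU1P => [->|]; last exact: in_image_B.
  split; first exact: imset_f.
  by have := x_fac j1; rewrite /completion_factor (negbTE j1_free) eqxx par => /setIP [].
split => //; rewrite inE transversal_card // transversal_legal // eqxx meetB /=.
case: ifP => [par|->] //.
by rewrite cardsU1 in_setI (negbTE (x_free _ j1_free)) /= par.
Qed.

Lemma card_completions (c a : nat) :
  (forall i, c <= #|B :&: part n i|)%N -> (forall i, a <= #|~: B :&: part n i|)%N ->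
  (c <= a)%N -> (c * a ^ (k - #|S| - 1) <= #|box completion_factor|)%N.
Proof.
move=> cB aB ca; rewrite card_box (bigD1 j1) //=; apply: leq_mul.
  rewrite /completion_factor (negbTE j1_free) eqxx /=.
  by case: ifP => _; [exact: cB | exact: leq_trans ca (aB j1)].
have -> : (a ^ (k - #|S| - 1) = \prod_(i in ~: parts S :\ j1) a)%N.
  rewrite prod_nat_const; congr (_ ^ _).
  have := cardsC (parts S); have := cardsD1 j1 (~: parts S).
  rewrite in_setC j1_free card_ord card_parts //= => ->.
  by move: #|S| #|_ :\ j1| => s t; lia.
rewrite big_mkcond (big_mkcond (fun i => i != j1)) /=; apply: leq_prod => i _.
rewrite /completion_factor in_setD1 in_setC.
case: (eqVneq i j1) => //= _; case: (boolP (i \in parts S)) => [/imsetP [v vS ->]|] //=.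
by apply/card_gt0P; exists v; rewrite in_setI vS in_part eqxx.
Qed.

End EvenGraphLink.

Lemma even_graph_deg (k n c a : nat) (B S : {set vtx k n}) :
  (forall i, c <= #|B :&: part n i|)%N -> (forall i, a <= #|~: B :&: part n i|)%N ->
  (c <= a)%N -> legal S -> (#|S| < k)%N ->
  (c * a ^ (k - #|S| - 1) <= deg (even_graph B) S)%N.
Proof.
move=> cB aB ca legS S_small.
have [j1 j1_free] : exists j1, j1 \notin parts S.
  apply/existsP; rewrite -negb_forall; apply: contraTN S_small => /forallP all_parts.
  have : [set: 'I_k] \subset parts S by apply/subsetP.
  by rewrite -leqNgt -(card_parts legS) => /subset_leq_card; rewrite cardsT card_ord.
apply: leq_trans (card_completions legS j1_free cB aB ca) _.
exact: deg_ge_card (completion_edge legS j1_free).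
Qed.

(* The set [B] of the construction: the first [2c + 1] vertices of part 0
   and the first [2c] vertices of every other part; it has odd size. *)
Definition odd_set (k n c : nat) : {set vtx k n} :=
  [set v : vtx k n | (v.2 < c.*2 + (v.1 == 0 :> nat))%N].

Section OddSet.
Variables (k n c : nat).
Hypothesis c_small : (c.*2.+1 <= n)%N.

Lemma card_odd_set_part (i : 'I_k) :
  #|odd_set k n c :&: part n i| = (c.*2 + (i == 0 :> nat))%N.
Proof.
have b_le : (c.*2 + (i == 0 :> nat) <= n)%N by case: (i == 0 :> nat); lia.
have -> : odd_set k n c :&: part n i =
    [set ((i, widen_ord b_le j) : vtx k n) | j : 'I_(c.*2 + (i == 0 :> nat))].
  apply/setP => -[i' j]; rewrite !inE /=; apply/andP/imsetP => [[jb /eqP ii]|[j' _ [-> ->]]].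
    by subst i'; exists (Ordinal jb) => //; congr (_, _); apply: val_inj.
  by rewrite eqxx /= ltn_ord.
by rewrite card_imset ?card_ord // => j j' [] /val_inj.
Qed.

Lemma card_odd_set_compl_part (i : 'I_k) :
  #|~: odd_set k n c :&: part n i| = (n - (c.*2 + (i == 0 :> nat)))%N.
Proof.
have := cardsID (odd_set k n c) (part n i).
rewrite setIC card_odd_set_part setDE setIC card_part.
by move: #|_ :&: part n i| => t; lia.
Qed.

End OddSet.

(* [|B| = (2c + 1) + (k - 1) 2c] is odd. *)
Lemma odd_set_odd (k n c : nat) :
  (0 < k)%N -> (c.*2.+1 <= n)%N -> odd #|odd_set k n c|.
Proof.
case: k => // k' _ c_small.
rewrite (card_disjoint_cover _ (A := part n)) => [|i j ij|v]; last 2 first.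
- rewrite -setI_eq0; apply/eqP/setP => v; rewrite !inE.
  by apply/negbTE/andP => -[/eqP vi /eqP vj]; rewrite -vi -vj eqxx in ij.
- by exists v.1; rewrite in_part.
under eq_bigr do rewrite setIC card_odd_set_part //.
rewrite big_split /= sum_nat_const card_ord big_ord_recl big1 //.
by rewrite addn0 oddD oddM odd_double andbF.
Qed.

Section Ratio.
Variables (q n : nat).
Hypotheses (q_ge6 : (6 <= q)%N) (n_ge : (2 * q <= n)%N).

Lemma quotient_bounds :
  [/\ ((n %/ q).*2.+1 * q <= 3 * n)%N, (n <= (n %/ q).*2 * q)%N
    & ((n %/ q).*2.+1.*2 <= n)%N].
Proof.
have q_pos : (0 < q)%N by lia.
have := leq_divM n q; have := ltn_ceil n q_pos.
by move: (n %/ q) => c; rewrite -!muln2; split; nia.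
Qed.

Lemma odd_set_fits : ((n %/ q).*2.+1 <= n)%N.
Proof. by have [_ _] := quotient_bounds; rewrite -!muln2; lia. Qed.

Lemma odd_set_defect (k : nat) : (0 < k)%N ->
  (q * \sum_(i < k) #|odd_set k n (n %/ q) :&: part n i| * n ^ (k - 1)
     <= 3 * (k * n) ^ k)%N.
Proof.
move=> k_pos; have [B_small _ _] := quotient_bounds; have c_small := odd_set_fits.
have sum_le : (\sum_(i < k) #|odd_set k n (n %/ q) :&: part n i| * n ^ (k - 1)
    <= \sum_(i < k) (n %/ q).*2.+1 * n ^ (k - 1))%N.
  apply: leq_sum => i _; rewrite leq_mul2r card_odd_set_part //; apply/orP; right.
  by have := leq_b1 (i == 0 :> nat); lia.
apply: leq_trans (leq_mul (leqnn q) sum_le) _.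
rewrite sum_nat_const card_ord mulnCA mulnA.
have n_pow : (n * n ^ (k - 1) = n ^ k)%N by rewrite -expnS; congr (_ ^ _); lia.
have k_pow : (k * n ^ k <= (k * n) ^ k)%N.
  rewrite expnMn leq_mul2r; apply/orP; right.
  by case: (k) k_pos => // k' _; rewrite expnS leq_pmulr ?expn_gt0.
apply: leq_trans (_ : 3 * (k * n ^ k) <= _)%N; last by rewrite leq_mul2l k_pow orbT.
rewrite -n_pow; move: (n ^ (k - 1)) => t.
by have := leq_mul B_small (leqnn (k * t)); nia.
Qed.

Lemma odd_set_degree_bound (k s : nat) : (s + 2 <= k)%N ->
  (n ^ (k - s) <= q * 2 ^ k * ((n %/ q).*2 * (n - (n %/ q).*2.+1) ^ (k - s - 1)))%N.
Proof.
move=> s_small; have [_ n_le B_half] := quotient_bounds.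
move: (n %/ q).*2 n_le B_half => c n_le B_half.
have -> : (k - s = (k - s - 1).+1)%N by lia.
rewrite subSS subn0.
have n_le_a : (n <= 2 * (n - c.+1))%N by rewrite -muln2 in B_half; lia.
have pow2 : (2 ^ (k - s - 1) <= 2 ^ k)%N by rewrite leq_pexp2l //; lia.
move: (k - s - 1)%N pow2 => r pow2; rewrite expnS.
have pow_le : (n ^ r <= (2 * (n - c.+1)) ^ r)%N by case: r {pow2} => // r; rewrite leq_exp2r.
apply: leq_trans (leq_mul n_le pow_le) _.
rewrite expnMn; move: (2 ^ r)%N (2 ^ k)%N ((n - c.+1) ^ r)%N pow2 => u w v uw.
by have := leq_mul (leqnn (c * q * v)) uw; nia.
Qed.

End Ratio.

Local Open Scope ring_scope.

Lemma exists_ratio (R : realType) (mu : R) :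
  0 < mu -> exists q : nat, (6 <= q)%N /\ 3 < mu * q%:R.
Proof.
move=> mu_pos; pose q := maxn 6 (Num.Def.archi_bound (3 / mu)).
exists q; split; first exact: leq_maxl.
have /archi_boundP : 0 <= 3 / mu by rewrite divr_ge0 ?ltW.
rewrite ltr_pdivrMr // mulrC => /lt_le_trans; apply.
by rewrite ler_pM2l // ler_nat leq_maxr.
Qed.

Section RealBounds.
Variables (q n : nat).
Hypotheses (q_ge6 : (6 <= q)%N) (n_ge : (2 * q <= n)%N).

Lemma odd_set_dense (R : realType) (p mu : R) (k : nat) :
  (0 < k)%N -> p <= 1 -> 3 < mu * q%:R ->
  dense p mu (even_graph (odd_set k n (n %/ q)%N)).
Proof.
move=> k_pos p1 mu_q; apply: dense_of_missing p1 (even_graph_missing _) _.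
have q_pos : 0 < q%:R :> R by rewrite ltr0n; lia.
rewrite -(ler_pM2r q_pos) mulrAC; apply: (@le_trans _ _ (3 * (k * n)%N%:R ^+ k)).
  by rewrite -natrX -!natrM ler_nat mulnC odd_set_defect.
by rewrite ler_wpM2r ?exprn_ge0 ?ler0n // ltW.
Qed.

Lemma odd_set_min_degree (R : realType) (k : nat) (S : {set vtx k n}) :
  legal S -> (#|S| + 2 <= k)%N ->
  ((q * 2 ^ k)%N%:R)^-1 * n%:R ^+ (k - #|S|)
    <= (deg (even_graph (odd_set k n (n %/ q)%N)) S)%:R :> R.
Proof.
move=> legS S_small; have [_ _ B_half] := quotient_bounds q_ge6 n_ge.
have c_small := odd_set_fits q_ge6 n_ge.
set B := odd_set k n (n %/ q)%N.
have cB i : ((n %/ q).*2 <= #|B :&: part n i|)%N.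
  by rewrite card_odd_set_part // leq_addr.
have aB i : (n - (n %/ q).*2.+1 <= #|~: B :&: part n i|)%N.
  by rewrite card_odd_set_compl_part // leq_sub2l // -addn1 leq_add2l leq_b1.
have ca : ((n %/ q).*2 <= n - (n %/ q).*2.+1)%N by rewrite -!muln2 in B_half *; lia.
have S_lt : (#|S| < k)%N by lia.
have deg_ge := even_graph_deg cB aB ca legS S_lt.
have qk_pos : 0 < (q * 2 ^ k)%N%:R :> R by rewrite ltr0n muln_gt0 expn_gt0; lia.
rewrite mulrC ler_pdivrMr // -natrX -natrM ler_nat.
apply: leq_trans (odd_set_degree_bound q_ge6 n_ge S_small) _.
by rewrite mulnC leq_mul2r deg_ge orbT.
Qed.

End RealBounds.

Unset Implicit Arguments.

Theorem theorem1p3 (R : realType) (p mu : R) (k l m : nat) :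
  0 < p < 1 -> 0 < mu -> (3 <= k)%N -> (1 <= l)%N -> (l <= k - 2)%N -> (2 <= m)%N ->
  exists (n0 : nat) (alpha : R), 0 < alpha /\
    forall n : nat, (n0 <= n)%N ->
      exists E : {set {set vtx k n}},
        kpartite_kgraph E /\
        dense p mu E /\
        (forall S : {set vtx k n}, legal S -> #|S| = l ->
           alpha * (n%:R ^+ (k - l)) <= (deg E S)%:R) /\
        ~ has_Kfactor m E.
Proof.
move=> /andP [_ p_lt1] mu_pos k_ge3 _ l_le _.
have [q [q_ge6 mu_q]] := exists_ratio mu_pos.
exists (2 * q)%N, ((q * 2 ^ k)%N%:R)^-1; split.
  by rewrite invr_gt0 ltr0n muln_gt0 expn_gt0; lia.
move=> n n_ge; pose B := odd_set k n (n %/ q)%N.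
exists (even_graph B); split; [|split; [|split]].
- exact: even_graph_kpartite.
- by apply: odd_set_dense => //; [lia | exact: ltW].
- by move=> S legS S_l; rewrite -S_l; apply: odd_set_min_degree => //; lia.
- apply: (@no_Kfactor_of_odd _ _ _ _ B); first by move=> e; rewrite inE => /andP [].
  by apply: odd_set_odd; [lia | exact: odd_set_fits].
Qed.
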